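(* Let $\beta>0$ and let $V\in\mathbb R^{d\times d}$ be symmetric and negative definite. Let $(x_1(t),x_2(t))\in\mathbb S^{d-1}\times\mathbb S^{d-1}$ solve the two-particle system \[ \dot x_i=P^\perp_{x_i}\Big(\frac1{Z_i}\sum_{j=1}^2 e^{\beta\langle x_i,Vx_j\rangle}Vx_j\Big),\qquad Z_i=\sum_{k=1}^2 e^{\beta\langle x_i,Vx_k\rangle},\quad i=1,2. \] Then $\rho(t):=\langle x_1(t),x_2(t)\rangle$ satisfies $\dot\rho(t)<0$ whenever $\rho(t)\in(-1,1)$; in particular $\rho$ is strictly decreasing on any time interval on which $\rho(t)\in(-1,1)$.
   Context: $P^\perp_xy=y-\langle x,y\rangle x$ denotes the orthogonal projection onto $T_x\mathbb S^{d-1}$. *)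

From HB Require Import structures.
From mathcomp Require Import all_boot all_order all_algebra.
From mathcomp Require Import all_classical all_reals all_analysis.
Set Implicit Arguments. Unset Strict Implicit. Unset Printing Implicit Defensive.
Import Order.TTheory GRing.Theory Num.Theory.
Import numFieldNormedType.Exports.
Local Open Scope ring_scope.

Definition dotp (R : realType) (d : nat) (u v : 'cV[R]_d) : R :=
  \sum_(i < d) u i 0 * v i 0.

Definition projT (R : realType) (d : nat) (x y : 'cV[R]_d) : 'cV[R]_d :=
  y - dotp x y *: x.

Definition sym_negdef (R : realType) (d : nat) (V : 'M[R]_d) : Prop :=
  V^T = V /\ forall v : 'cV[R]_d, v != 0 -> dotp v (V *m v) < 0.

Definition Zpart (R : realType) (d : nat) (beta : R) (V : 'M[R]_d)
  (x xa xb : 'cV[R]_d) : R :=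
  expR (beta * dotp x (V *m xa)) + expR (beta * dotp x (V *m xb)).

(* Right-hand side of the equation for particle x, with the two particles xa, xb:
   P^perp_x ( (1/Z) sum_{j} e^{beta <x, V x_j>} V x_j ) *)
Definition rhs2 (R : realType) (d : nat) (beta : R) (V : 'M[R]_d)
  (x xa xb : 'cV[R]_d) : 'cV[R]_d :=
  projT x ((Zpart beta V x xa xb)^-1 *:
    (expR (beta * dotp x (V *m xa)) *: (V *m xa)
     + expR (beta * dotp x (V *m xb)) *: (V *m xb))).

From HB Require Import structures.
From mathcomp Require Import all_boot all_order all_algebra.
From mathcomp Require Import all_classical all_reals all_analysis.
From mathcomp Require Import ring lra.
Set Implicit Arguments.
Unset Strict Implicit.
Unset Printing Implicit Defensive.
Import Order.TTheory GRing.Theory Num.Theory.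
Import numFieldNormedType.Exports.
Local Open Scope ring_scope.

(* Write a, b, c for <x1,Vx1>, <x2,Vx2>, <x1,Vx2> and r = <x1,x2>.  A
   two-point softmax weight is a logistic function of the difference of the
   exponents, and rho' is affine in the weights w1 < w2 that the two particles
   put on x1:
     rho' = (1-r)/2 [(a+b+2c) + (a-b)(w1+w2-1)] + (1+r)/2 (w2-w1)(a+b-2c).
   Negative definiteness makes a+b-2c = <x1-x2, V(x1-x2)> and
   a+b+2c = <x1+x2, V(x1+x2)> negative, so the second term is negative.
   The first term is nonpositive by  x sinh x <= P (cosh x + cosh y)  whenever
   x^2 <= P y, applied with x = beta(a-b)/2, y = beta(2c-a-b)/2 and
   P = -beta(a+b+2c)/2, the hypothesis being Cauchy-Schwarz c^2 <= ab for -V.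
   Strict monotonicity then follows from the mean value theorem. *)

Section Sigmoid.
Variable R : realType.

Definition sigmoid (t : R) : R := (1 + expR (- t))^-1.

Lemma sigmoid_expR s t : (expR s + expR t)^-1 * expR s = sigmoid (s - t).
Proof.
rewrite /sigmoid opprB expRD expRN.
have := expR_gt0 s; have := expR_gt0 t => et_gt0 es_gt0.
by field; rewrite ?gt_eqF //; lra.
Qed.

Lemma ltr_sigmoid : {mono sigmoid : x y / x < y}.
Proof.
move=> x y; rewrite /sigmoid ltf_pV2 ?posrE ?addr_gt0 ?expR_gt0 //.
by rewrite ltrD2l ltr_expR ltrN2.
Qed.

Lemma sigmoid_sub_add x y : sigmoid (x - y) + sigmoid (x + y) - 1 =
  (expR x - expR (- x)) / (expR x + expR (- x) + expR y + expR (- y)).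
Proof.
rewrite /sigmoid !opprD !opprK !expRD !expRN.
have := expR_gt0 x; have := expR_gt0 y => ey_gt0 ex_gt0.
by field; rewrite !gt_eqF // ?(addr_gt0, mulr_gt0, ltr01, expR_gt0).
Qed.

End Sigmoid.

Section ScalarInequalities.
Variable R : realType.
Implicit Types x y P : R.

Lemma expR_subN_le x : expR x - expR (- x) <= 2 * x * expR x.
Proof.
have -> : expR (- x) = expR x * expR (- (2 * x)) by rewrite -expRD; congr expR; ring.
have := expR_ge1Dx (- (2 * x)); have := expR_gt0 x; nra.
Qed.

Lemma expR_ge2x x : 2 * x <= expR x.
Proof.
have -> : expR x = expR (x / 2) ^+ 2 by rewrite -expRM_natl; congr expR; field.
have [x_le0|x_gt0] := lerP x 0; first by have := expR_gt0 (x / 2); nra.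
have := expR_ge1Dx (x / 2); set E := expR (x / 2) => E_ge.
have : 0 <= (E - (1 + x / 2)) * (E + (1 + x / 2)) by rewrite mulr_ge0 //; lra.
have := sqr_ge0 (1 - x / 2); rewrite expr2; nra.
Qed.

Lemma mul_expR_subN_le x y P : 0 < P -> x ^+ 2 <= P * y ->
  x * (expR x - expR (- x)) <= P * (expR x + expR (- x) + expR y + expR (- y)).
Proof.
wlog x_ge0 : x / 0 <= x => [hwlog P_gt0 xy|P_gt0 xy].
  have [/hwlog|x_lt0] := lerP 0 x; first exact.
  have := hwlog (- x); rewrite opprK sqrrN oppr_ge0 => /(_ (ltW x_lt0) P_gt0 xy).
  lra.
(* The part P (e^x - e^-x) is free; the excess is paid for by e^y, since
   y - x >= x (x - P) / P. *)
suff gap : (x - P) * (expR x - expR (- x)) <= P * expR y.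
  have := expR_gt0 (- x); have := expR_gt0 (- y); nra.
have [x_le_P|P_lt_x] := lerP x P.
  have : expR (- x) <= expR x by rewrite ler_expR; lra.
  have := expR_gt0 y; nra.
have sq : x * (x - P) <= P * (y - x) by rewrite expr2 in xy; nra.
have -> : expR y = expR (y - x) * expR x by rewrite -expRD subrK.
have ex_gt0 := expR_gt0 x.
apply: (le_trans (ler_wpM2l _ (expR_subN_le x))); first lra.
have := ler_wpM2l (ltW (mulr_gt0 P_gt0 ex_gt0)) (expR_ge2x (y - x)).
nra.
Qed.

Lemma sigmoid_gap_le (beta a b c : R) :
  0 < beta -> a + b + 2 * c < 0 -> c ^+ 2 <= a * b ->
  (a - b) * (sigmoid (beta * (a - c)) + sigmoid (beta * (c - b)) - 1)
    <= - (a + b + 2 * c).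
Proof.
move=> beta_gt0 S_lt0 cs; set S := - (a + b + 2 * c).
have S_gt0 : 0 < S by rewrite /S; lra.
have k_gt0 : 0 < beta / 2 by lra.
set k := beta / 2; set x := k * (a - b); set y := k * (2 * c - a - b).
have -> : beta * (a - c) = x - y by rewrite /x /y /k; field.
have -> : beta * (c - b) = x + y by rewrite /x /y /k; field.
rewrite sigmoid_sub_add mulrA ler_pdivrMr; last first.
  by rewrite !addr_gt0 ?expR_gt0.
have xy : x ^+ 2 <= k * S * y.
  have -> : x ^+ 2 = k ^+ 2 * (a - b) ^+ 2 by rewrite /x exprMn.
  have -> : k * S * y = k ^+ 2 * (S * (2 * c - a - b)) by rewrite /y; ring.
  by apply: ler_wpM2l; [exact: sqr_ge0 | rewrite /S; nra].
rewrite -(ler_pM2l k_gt0) mulrA mulrA.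
exact: mul_expR_subN_le (mulr_gt0 k_gt0 S_gt0) xy.
Qed.

Lemma two_point_velocity_lt0 (a b c r w1 w2 : R) :
  a + b - 2 * c < 0 -> w1 < w2 -> (a - b) * (w1 + w2 - 1) <= - (a + b + 2 * c) ->
  -1 < r < 1 ->
  w2 * a + (1 - w2) * c - (w2 * c + (1 - w2) * b) * r
  + (w1 * c + (1 - w1) * b - (w1 * a + (1 - w1) * c) * r) < 0.
Proof.
move=> D_lt0 w12 gap /andP[r_gtN1 r_lt1].
have -> : w2 * a + (1 - w2) * c - (w2 * c + (1 - w2) * b) * r
    + (w1 * c + (1 - w1) * b - (w1 * a + (1 - w1) * c) * r)
  = (1 - r) / 2 * (a + b + 2 * c + (a - b) * (w1 + w2 - 1))
    + (1 + r) / 2 * ((w2 - w1) * (a + b - 2 * c)) by field.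
have : (w2 - w1) * (a + b - 2 * c) < 0 by rewrite pmulr_rlt0 // subr_gt0.
have : a + b + 2 * c + (a - b) * (w1 + w2 - 1) <= 0 by lra.
nra.
Qed.

End ScalarInequalities.

Section InnerProduct.
Variables (R : realType) (d : nat).
Implicit Types (u v w x y xa xb : 'cV[R]_d) (V : 'M[R]_d) (beta s t : R).

Lemma dotpE u v : dotp u v = (u^T *m v) 0 0.
Proof. by rewrite mxE; apply: eq_bigr => i _; rewrite mxE. Qed.

Lemma dotpC u v : dotp u v = dotp v u.
Proof. by apply: eq_bigr => i _; rewrite mulrC. Qed.

Lemma dotpDr u v w : dotp u (v + w) = dotp u v + dotp u w.
Proof. by rewrite !dotpE mulmxDr mxE. Qed.

Lemma dotpZr u v s : dotp u (s *: v) = s * dotp u v.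
Proof. by rewrite !dotpE -scalemxAr mxE. Qed.

Lemma dotpBr u v w : dotp u (v - w) = dotp u v - dotp u w.
Proof. by rewrite -scaleN1r dotpDr dotpZr mulN1r. Qed.

Lemma dotpDl u v w : dotp (u + v) w = dotp u w + dotp v w.
Proof. by rewrite dotpC dotpDr !(dotpC w). Qed.

Lemma dotpZl u v s : dotp (s *: u) v = s * dotp u v.
Proof. by rewrite dotpC dotpZr dotpC. Qed.

Lemma dotp0r u : dotp u 0 = 0.
Proof. by rewrite dotpE mulmx0 mxE. Qed.

Lemma dotp_mulmx_sym V u w : V^T = V -> dotp u (V *m w) = dotp w (V *m u).
Proof.
move=> V_sym; rewrite !dotpE.
have -> : (u^T *m (V *m w)) 0 0 = (u^T *m (V *m w))^T 0 0 by rewrite [RHS]mxE.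
by rewrite !trmx_mul trmxK V_sym mulmxA.
Qed.

Lemma dotp_mulmx_comb V u w s t : V^T = V ->
  dotp (s *: u + t *: w) (V *m (s *: u + t *: w)) =
  s ^+ 2 * dotp u (V *m u) + 2 * s * t * dotp u (V *m w) + t ^+ 2 * dotp w (V *m w).
Proof.
move=> V_sym; rewrite mulmxDr -!scalemxAr !dotpDl !dotpDr !dotpZl !dotpZr.
by rewrite (dotp_mulmx_sym w u V_sym); ring.
Qed.

Lemma sym_negdef_le0 V v : sym_negdef V -> dotp v (V *m v) <= 0.
Proof.
case=> _ V_neg; have [->|/V_neg/ltW //] := eqVneq v 0.
by rewrite mulmx0 dotp0r.
Qed.

Lemma sym_negdef_cauchy_schwarz V u w : sym_negdef V ->
  dotp u (V *m w) ^+ 2 <= dotp u (V *m u) * dotp w (V *m w).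
Proof.
move=> V_negdef; have [V_sym V_neg] := V_negdef.
have [->|/V_neg b_lt0] := eqVneq w 0.
  by rewrite mulmx0 !dotp0r expr2 !mulr0.
have := sym_negdef_le0 (dotp w (V *m w) *: u + (- dotp u (V *m w)) *: w) V_negdef.
rewrite dotp_mulmx_comb // => Q_le0.
have : dotp w (V *m w) *
    (dotp u (V *m u) * dotp w (V *m w) - dotp u (V *m w) ^+ 2) <= 0.
  by move: Q_le0; rewrite !expr2; nra.
by rewrite nmulr_rle0 // subr_ge0.
Qed.

Lemma is_derive_dotp (u w : R -> 'cV[R]_d) (du dw : 'cV[R]_d) (t : R) :
  (forall k, is_derive t 1 (fun s => u s k 0) (du k 0)) ->
  (forall k, is_derive t 1 (fun s => w s k 0) (dw k 0)) ->
  is_derive t 1 (fun s => dotp (u s) (w s)) (dotp (u t) dw + dotp (w t) du).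
Proof.
move=> u_der w_der.
have -> : (fun s => dotp (u s) (w s)) =
    \sum_(k < d) ((fun s => u s k 0) * (fun s => w s k 0)).
  by rewrite fct_sumE; apply/funext.
by apply: is_derive_eq; rewrite /dotp -big_split.
Qed.

Lemma dotp_projT_comb x y u v s t :
  dotp y (projT x (s *: u + t *: v)) =
  s * dotp y u + t * dotp y v - (s * dotp x u + t * dotp x v) * dotp y x.
Proof. by rewrite /projT dotpBr !dotpDr !dotpZr; ring. Qed.

Lemma rhs2E beta V x xa xb :
  let w := sigmoid (beta * (dotp x (V *m xa) - dotp x (V *m xb))) in
  rhs2 beta V x xa xb = projT x (w *: (V *m xa) + (1 - w) *: (V *m xb)).
Proof.
rewrite /rhs2 /Zpart mulrBr -sigmoid_expR scalerDr !scalerA.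
set Ea := expR _; set Eb := expR _.
have Ea_gt0 : 0 < Ea by exact: expR_gt0.
have Eb_gt0 : 0 < Eb by exact: expR_gt0.
by congr (projT x (_ + _ *: _)); field; rewrite gt_eqF ?addr_gt0.
Qed.

Lemma rhs2_dotp_lt0 beta V u w : 0 < beta -> sym_negdef V ->
  dotp u u = 1 -> dotp w w = 1 -> -1 < dotp u w < 1 ->
  dotp u (rhs2 beta V w u w) + dotp w (rhs2 beta V u u w) < 0.
Proof.
move=> beta_gt0 V_negdef u_unit w_unit /andP[r_gtN1 r_lt1].
have [V_sym V_neg] := V_negdef.
have D_lt0 : dotp u (V *m u) + dotp w (V *m w) - 2 * dotp u (V *m w) < 0.
  have uw_neq0 : u - w != 0.
    by apply: contraTneq r_lt1 => /subr0_eq ->; rewrite w_unit ltxx.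
  have := V_neg _ uw_neq0.
  have -> : u - w = 1 *: u + (-1) *: w by rewrite scale1r scaleN1r.
  by rewrite dotp_mulmx_comb // expr1n sqrrN expr1n; lra.
have S_lt0 : dotp u (V *m u) + dotp w (V *m w) + 2 * dotp u (V *m w) < 0.
  have uw_neq0 : u + w != 0.
    apply: contraTneq r_gtN1 => /eqP; rewrite addr_eq0 => /eqP ->.
    by rewrite -[- w]scaleN1r dotpZl w_unit mulr1 ltxx.
  have := V_neg _ uw_neq0.
  have -> : u + w = 1 *: u + 1 *: w by rewrite !scale1r.
  by rewrite dotp_mulmx_comb // expr1n; lra.
rewrite !rhs2E !dotp_projT_comb (dotp_mulmx_sym w u V_sym) (dotpC w u).
apply: two_point_velocity_lt0 => //; last by rewrite r_gtN1.
  by rewrite ltr_sigmoid ltr_pM2l //; lra.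
exact: sigmoid_gap_le (sym_negdef_cauchy_schwarz _ _ V_negdef).
Qed.

End InnerProduct.

Theorem lemma6p3 (R : realType) (d : nat) (beta : R) (V : 'M[R]_d)
  (T0 T1 : R) (x1 x2 : R -> 'cV[R]_d) :
  (0 < beta)%R ->
  sym_negdef V ->
  (T0 < T1)%R ->
  (* the trajectories stay on the unit sphere S^{d-1} *)
  (forall t, t \in `]T0, T1[ -> dotp (x1 t) (x1 t) = 1 /\ dotp (x2 t) (x2 t) = 1) ->
  (* the two-particle ODE, componentwise *)
  (forall t, t \in `]T0, T1[ -> forall k : 'I_d,
     is_derive t (1:R) (fun s => x1 s k 0) (rhs2 beta V (x1 t) (x1 t) (x2 t) k 0) /\
     is_derive t (1:R) (fun s => x2 s k 0) (rhs2 beta V (x2 t) (x1 t) (x2 t) k 0)) ->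
  let rho := fun t => dotp (x1 t) (x2 t) in
  (forall t, t \in `]T0, T1[ -> (-1 < rho t < 1)%R ->
     derivable rho t 1 /\ (derive1 rho t < 0)%R) /\
  (forall a b, T0 < a -> a < b -> b < T1 ->
     (forall t, a <= t <= b -> (-1 < rho t < 1)%R) -> rho b < rho a)%R.
Proof.
move=> beta_gt0 V_negdef _ on_sphere ode rho.
have rho_derive t : t \in `]T0, T1[ -> is_derive t 1 rho
    (dotp (x1 t) (rhs2 beta V (x2 t) (x1 t) (x2 t))
     + dotp (x2 t) (rhs2 beta V (x1 t) (x1 t) (x2 t))).
  by move=> tT; apply: is_derive_dotp => k; have [] := ode t tT k.
have rho_decr t : t \in `]T0, T1[ -> -1 < rho t < 1 ->
    derivable rho t 1 /\ derive1 rho t < 0.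
  move=> tT rho_t; have [x1_unit x2_unit] := on_sphere t tT.
  have rho_t' := rho_derive t tT.
  split; first exact: ex_derive.
  by rewrite derive1E derive_val; exact: rhs2_dotp_lt0.
split=> // a b T0a ab bT1 rho_ab.
have in_ab t : t \in `[a, b] -> (t \in `]T0, T1[) /\ (-1 < rho t < 1).
  rewrite !in_itv /= => t_ab; split; last exact: rho_ab.
  by case/andP: t_ab => ta tb; apply/andP; split; lra.
have in_oo t : t \in `]a, b[ -> t \in `[a, b] by apply: subset_itv_oo_cc.
apply: (ltr0_derive1_lt_cc (f := rho) (a := a) (b := b)) => //.
- by move=> t /in_oo/in_ab[tT rho_t]; case: (rho_decr t tT rho_t).
- by move=> t /in_oo/in_ab[tT rho_t]; case: (rho_decr t tT rho_t).
- apply: derivable_within_continuous => t /in_ab[tT rho_t].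
  by case: (rho_decr t tT rho_t).
- by rewrite in_itv /= lexx ltW.
- by rewrite in_itv /= lexx ltW.
Qed.
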